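(* Let $V=V(\pi)$ be the finite-dimensional irreducible representation of $Y(\mathfrak{g})$ with Drinfeld polynomials $\pi=(\pi_1(u),\dots,\pi_l(u))$ and highest weight vector $v^+$, and let $\lambda_\pi=\sum_{i\in I}\deg(\pi_i)\,\omega_i$. Let $w=s_{r_1}s_{r_2}\cdots s_{r_p}$ be a reduced expression of an element $w$ of the Weyl group of $\mathfrak{g}$. For $1\le j\le p$ put $\sigma_j=s_{r_{j+1}}\cdots s_{r_p}$ and write $\sigma_j(\lambda_\pi)=m_j\omega_{r_j}+\sum_{n\ne r_j}c_n\omega_n$, and put $$v_{\sigma_j(\lambda_\pi)}=(x^-_{r_{j+1},0})^{m_{j+1}}(x^-_{r_{j+2},0})^{m_{j+2}}\cdots(x^-_{r_p,0})^{m_p}v^+ .$$ Then for every $1\le j\le p$, $Y_{r_j}\big(v_{\sigma_j(\lambda_\pi)}\big)$ is a highest weight representation of $Y_{r_j}$ (with highest weight vector $v_{\sigma_j(\lambda_\pi)}$).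
   Context: $\mathfrak{g}$ is a complex simple Lie algebra of rank $l$, $I=\{1,\dots,l\}$, Cartan matrix $A=(a_{ij})$, $D=\operatorname{diag}(d_1,\dots,d_l)$ with coprime positive integers $d_i$ and $DA$ symmetric; $\omega_i$ are the fundamental weights, $\alpha_i$ the simple roots, $s_i$ the simple reflections. The Yangian $Y(\mathfrak{g})$ is the associative $\mathbb{C}$-algebra with generators $x^\pm_{i,r},h_{i,r}$ ($i\in I$, $r\ge0$) and relations: $[h_{i,r},h_{j,s}]=0$, $[h_{i,0},x^\pm_{j,s}]=\pm d_ia_{ij}x^\pm_{j,s}$, $[x^+_{i,r},x^-_{j,s}]=\delta_{ij}h_{i,r+s}$, $[h_{i,r+1},x^\pm_{j,s}]-[h_{i,r},x^\pm_{j,s+1}]=\pm\frac12d_ia_{ij}(h_{i,r}x^\pm_{j,s}+x^\pm_{j,s}h_{i,r})$, $[x^\pm_{i,r+1},x^\pm_{j,s}]-[x^\pm_{i,r},x^\pm_{j,s+1}]=\pm\frac12d_ia_{ij}(x^\pm_{i,r}x^\pm_{j,s}+x^\pm_{j,s}x^\pm_{i,r})$, and for $i\neq j$, $m=1-a_{ij}$, $\sum_{\pi\in S_m}[x^\pm_{i,r_{\pi(1)}},[x^\pm_{i,r_{\pi(2)}},\dots,[x^\pm_{i,r_{\pi(m)}},x^\pm_{j,s}]\cdots]]=0$. Let $h_i(u)=1+\sum_{r\ge0}h_{i,r}u^{-r-1}$. $Y_i$ denotes the subalgebra generated by $x^\pm_{i,r},h_{i,r}$ ($r\ge0$); it is isomorphic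 to $Y(\mathfrak{sl}_2)$. A vector $v$ in a $Y_i$-module generates a highest weight representation $Y_i(v)$ of $Y_i$ if $x^+_{i,r}v=0$ and $h_{i,r}v\in\mathbb{C}v$ for all $r\ge0$. For an $l$-tuple $\pi$ of monic polynomials, $V(\pi)$ is the unique finite-dimensional irreducible $Y(\mathfrak{g})$-module generated by a vector $v^+$ with $x^+_{i,r}v^+=0$ for all $i,r$ and $h_i(u)v^+=\frac{\pi_i(u+d_i)}{\pi_i(u)}v^+$ (Laurent expansion at $u=\infty$). *)

From HB Require Import structures.
From mathcomp Require Import all_boot all_order all_algebra all_fingroup.
From mathcomp Require Import reals.
From mathcomp.real_closed Require Import complex.
Set Implicit Arguments. Unset Strict Implicit. Unset Printing Implicit Defensive.
Import Order.TTheory GRing.Theory Num.Theory.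
Local Open Scope ring_scope.

(* A generalized Cartan matrix is the Cartan matrix of a complex       *)
(* simple Lie algebra iff it is indecomposable and symmetrizable with  *)
(* positive definite symmetrization DA (finite type).                  *)
Definition simple_cartan_data (l : nat) (A : 'I_l -> 'I_l -> int)
    (d : 'I_l -> nat) : Prop :=
  [/\ (0 < l)%N,
      [/\ (forall i, A i i = 2),
          (forall i j, i != j -> A i j <= 0) &
          (forall i j, (A i j == 0) = (A j i == 0))],
      (forall S : {set 'I_l}, S != set0 -> S != setT ->
         exists i j, [/\ i \in S, j \notin S & A i j != 0]),
      [/\ (forall i, (0 < d i)%N),
          \big[gcdn/0%N]_i d i = 1%N &
          (forall i j, (d i)%:Z * A i j = (d j)%:Z * A j i)] &
      (forall x : 'I_l -> rat, (exists i, x i != 0) ->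
         0 < \sum_i \sum_j x i * (d i)%:R * (A i j)%:~R * x j)].

Section Yangian.
Variables (F : fieldType) (l n : nat).
Variables (A : 'I_l -> 'I_l -> int) (d : 'I_l -> nat).

Definition comm (X Y : 'M[F]_n) : 'M[F]_n := X *m Y - Y *m X.
Definition acomm (X Y : 'M[F]_n) : 'M[F]_n := X *m Y + Y *m X.

Definition da (i j : 'I_l) : F := ((d i)%:Z * A i j)%:~R.

Definition serre_sum (m : nat) (X : nat -> 'M[F]_n) (r : 'I_m -> nat)
    (Y : 'M[F]_n) : 'M[F]_n :=
  \sum_(s : {perm 'I_m}) foldr (fun k M => comm (X (r (s k))) M) Y (enum 'I_m).

(* The defining relations of Y(g), for operators on V = F^n
   (column vectors, acting by left multiplication). *)
Definition yangian_rep (xp xm h : 'I_l -> nat -> 'M[F]_n) : Prop :=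
  [/\ (forall i j r s, comm (h i r) (h j s) = 0) /\
      (forall i j s, comm (h i 0%N) (xp j s) = da i j *: xp j s
                  /\ comm (h i 0%N) (xm j s) = - (da i j *: xm j s)),
      (forall i j r s, comm (xp i r) (xm j s) = if i == j then h i (r + s)%N else 0),
      (forall i j r s,
         comm (h i r.+1) (xp j s) - comm (h i r) (xp j s.+1)
           = (da i j / 2) *: acomm (h i r) (xp j s)
      /\ comm (h i r.+1) (xm j s) - comm (h i r) (xm j s.+1)
           = - ((da i j / 2) *: acomm (h i r) (xm j s))),
      (forall i j r s,
         comm (xp i r.+1) (xp j s) - comm (xp i r) (xp j s.+1)
           = (da i j / 2) *: acomm (xp i r) (xp j s)
      /\ comm (xm i r.+1) (xm j s) - comm (xm i r) (xm j s.+1)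
           = - ((da i j / 2) *: acomm (xm i r) (xm j s))) &
      (forall i j, i != j ->
         forall (r : 'I_(absz (1 - A i j)) -> nat) (s : nat),
           serre_sum (xp i) r (xp j s) = 0 /\ serre_sum (xm i) r (xm j s) = 0)].

Definition is_submodule (xp xm h : 'I_l -> nat -> 'M[F]_n)
    (P : 'cV[F]_n -> Prop) : Prop :=
  [/\ P 0,
      (forall u v, P u -> P v -> P (u + v)),
      (forall (a : F) u, P u -> P (a *: u)) &
      (forall i r u, P u ->
         [/\ P (xp i r *m u), P (xm i r *m u) & P (h i r *m u)])].

Definition irreducible_rep (xp xm h : 'I_l -> nat -> 'M[F]_n) : Prop :=
  (0 < n)%N /\
  forall P, is_submodule xp xm h P -> (forall u, P u -> u = 0) \/ (forall u, P u).

(* [laurent_ratio p q phi]: the Laurent expansion at u = oo of q(u)/p(u)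
   is 1 + sum_{r>=0} phi r u^{-r-1}, i.e. p(u) (1 + sum_r phi r u^{-r-1}) = q(u)
   as formal Laurent series in u^{-1} (coefficientwise: u^m, m >= 0, and
   u^{-t}, t >= 1). *)
Definition laurent_ratio (p q : {poly F}) (phi : nat -> F) : Prop :=
  (forall m : nat,
     p`_m + \sum_(k < size p - m.+1) p`_(m + k.+1) * phi k = q`_m) /\
  (forall t : nat, (0 < t)%N ->
     \sum_(k < size p) p`_k * phi (k + t.-1)%N = 0).

Definition drinfeld_hw_vector (xp h : 'I_l -> nat -> 'M[F]_n)
    (pi : 'I_l -> {poly F}) (v : 'cV[F]_n) : Prop :=
  [/\ v != 0,
      (forall i r, xp i r *m v = 0) &
      exists phi : 'I_l -> nat -> F, forall i,
        laurent_ratio (pi i) (pi i \Po ('X + ((d i)%:R)%:P)) (phi i) /\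
        (forall r, h i r *m v = phi i r *: v)].

Definition hw_for_Yi (xp h : 'I_l -> nat -> 'M[F]_n) (i : 'I_l)
    (v : 'cV[F]_n) : Prop :=
  (forall r, xp i r *m v = 0) /\ (forall r, exists c : F, h i r *m v = c *: v).

End Yangian.

(* Weyl group acting on weights written in the basis of fundamental    *)
(* weights: lam = sum_k lam k * omega_k.                               *)
(* s_i(lam) = lam - <lam, alpha_i^vee> alpha_i, alpha_i = sum_k a_ki omega_k *)
Section Weyl.
Variables (l : nat) (A : 'I_l -> 'I_l -> int).

Definition sref (i : 'I_l) (lam : 'I_l -> int) : 'I_l -> int :=
  fun k => lam k - lam i * A k i.

(* [weyl_act [:: r1; ...; rp] lam] = s_{r1} ( ... (s_{rp} lam)) *)
Definition weyl_act (w : seq 'I_l) (lam : 'I_l -> int) : 'I_l -> int :=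
  foldr sref lam w.

(* w is a reduced expression: no shorter word gives the same Weyl group
   element (the Weyl group acts faithfully on the weight lattice). *)
Definition reduced_word (w : seq 'I_l) : Prop :=
  forall w' : seq 'I_l,
    (forall lam k, weyl_act w' lam k = weyl_act w lam k) -> (size w <= size w')%N.

(* For t = [:: r_{j+1}; ...; r_p] (= drop j w),
   lowered_vec t = (x^-_{r_{j+1},0})^{m_{j+1}} ... (x^-_{r_p,0})^{m_p} v,
   where m_k is the coefficient of omega_{r_k} in
   sigma_k(lam) = weyl_act (drop k w) lam. *)
Fixpoint lowered_vec (F : fieldType) (n : nat) (Xm : 'I_l -> 'M[F]_n)
    (lam : 'I_l -> int) (v : 'cV[F]_n) (t : seq 'I_l) : 'cV[F]_n :=
  match t with
  | [::] => v
  | i :: t' => iter (absz (weyl_act t' lam i)) (fun u => Xm i *m u)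
                    (lowered_vec Xm lam v t')
  end.

End Weyl.

(* The exponents m_k are nonnegative: the word being reduced, sigma_k^-1 alpha_{r_k} is
   a positive root (a rank 2 computation and an induction on the length), and lam is
   dominant.  Since V is spanned by monomials in the x^-_{j,s} applied to v+, every
   weight of V lies below lam and the weight space of lam is the line through v+; the
   sl2-subalgebras make the set of weights Weyl invariant.  Hence x^+_{r_j,r} kills
   v_j := v_{sigma_j(lam)}: its weight sigma_j(lam) + alpha_{r_j} would be carried by
   sigma_j^-1 to lam + sigma_j^-1 alpha_{r_j}, above lam.  Finally (x^+_{r,0})^m is
   injective on the weight space of s_r mu when <mu, alpha_r^vee> = m >= 0, so by
   induction the weight space of sigma_j(lam) is the line through v_j, which the
   h_{r_j,r} preserve. *)

From HB Require Import structures.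
From mathcomp Require Import all_boot all_order all_algebra all_fingroup.
From mathcomp Require Import reals boolp.
From mathcomp.real_closed Require Import complex.
From mathcomp Require Import ring zify.
From Stdlib Require List.
Set Implicit Arguments. Unset Strict Implicit. Unset Printing Implicit Defensive.
Import Order.TTheory GRing.Theory Num.Theory.
Local Open Scope ring_scope.

Section ShiftedQuotient.
Variable F : fieldType.
Implicit Types (c : F) (p : {poly F}).

Lemma size_exp_XaddC c k : size (('X + c%:P) ^+ k) = k.+1.
Proof. by rewrite -[c]opprK polyCN size_exp_XsubC. Qed.

Lemma coef_exp_XaddC_gt c k m : (k < m)%N -> (('X + c%:P) ^+ k)`_m = 0.
Proof. by move=> lt_km; rewrite nth_default // size_exp_XaddC. Qed.

Lemma coef_exp_XaddC_diag c k : (('X + c%:P) ^+ k)`_k = 1.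
Proof.
by have /monicP := monic_exp k (monicXaddC c); rewrite lead_coefE size_exp_XaddC.
Qed.

Lemma coef_exp_XaddC_subdiag c k : (('X + c%:P) ^+ k.+1)`_k = k.+1%:R * c.
Proof.
elim: k => [|k IH]; first by rewrite expr1 coefD coefX coefC add0r mul1r.
rewrite exprSr mulrDr coefD coefMX coefMC /= IH coef_exp_XaddC_diag.
by rewrite [in RHS]mulrSr mulrDl.
Qed.

(* Compare the coefficients of u^(deg p - 1), or of u^-1 when deg p = 0. *)
Lemma laurent_ratio_shift_head p c phi : p \is monic ->
  laurent_ratio p (p \Po ('X + c%:P)) phi -> phi 0%N = c * ((size p).-1)%:R.
Proof.
move=> /monicP lead_p [coef_pos coef_neg].
have : (0 < size p)%N by rewrite size_poly_gt0 -lead_coef_eq0 lead_p oner_neq0.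
case size_p : (size p) => [|[|N]] // _.
  have := coef_neg 1%N isT; rewrite size_p big_ord1 add0n.
  have -> : p`_0 = 1 by rewrite -lead_p lead_coefE size_p.
  by rewrite mul1r => ->; rewrite mulr0.
have := coef_pos N; rewrite size_p subSn // subnn big_ord1 addn1.
have pN1 : p`_N.+1 = 1 by rewrite -lead_p lead_coefE size_p.
rewrite pN1 mul1r coef_comp_poly size_p !big_ord_recr /= big1 => [|k _]; last first.
  by rewrite coef_exp_XaddC_gt ?mulr0.
rewrite add0r coef_exp_XaddC_diag mulr1 coef_exp_XaddC_subdiag pN1 mul1r.
by move/addrI ->; rewrite mulrC.
Qed.

End ShiftedQuotient.

Section WeylWords.
Variables (l : nat) (A : 'I_l -> 'I_l -> int).
Hypothesis Aii : forall i, A i i = 2.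
Implicit Types (u v : seq 'I_l) (lam : 'I_l -> int).

Lemma weyl_act_cat u v lam :
  weyl_act A (u ++ v) lam = weyl_act A u (weyl_act A v lam).
Proof. exact: foldr_cat. Qed.

Lemma weyl_actD u lam mu : weyl_act A u (fun k => lam k + mu k) =
  (fun k => weyl_act A u lam k + weyl_act A u mu k).
Proof. by elim: u => [|j u IH] //=; rewrite IH; apply: funext => k; rewrite /sref; ring. Qed.

Lemma srefK j : involutive (sref A j).
Proof. by move=> lam; apply: funext => k; rewrite /sref Aii; ring. Qed.

Lemma weyl_act_revK u : cancel (weyl_act A u) (weyl_act A (rev u)).
Proof.
elim: u => [|j u IH] lam //=.
by rewrite rev_cons -cats1 weyl_act_cat /= srefK IH.
Qed.

Lemma weyl_act_Krev u : cancel (weyl_act A (rev u)) (weyl_act A u).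
Proof. by move=> lam; rewrite -{1}(revK u) weyl_act_revK. Qed.

Lemma weyl_eq_catl c u v : weyl_act A u =1 weyl_act A v ->
  weyl_act A (c ++ u) =1 weyl_act A (c ++ v).
Proof. by move=> eq_uv lam; rewrite !weyl_act_cat eq_uv. Qed.

Lemma weyl_eq_catr c u v : weyl_act A u =1 weyl_act A v ->
  weyl_act A (u ++ c) =1 weyl_act A (v ++ c).
Proof. by move=> eq_uv lam; rewrite !weyl_act_cat eq_uv. Qed.

Lemma weyl_eq_rev u v : weyl_act A u =1 weyl_act A v ->
  weyl_act A (rev u) =1 weyl_act A (rev v).
Proof. by move=> eq_uv lam; rewrite -{1}(weyl_act_Krev v lam) -eq_uv weyl_act_revK. Qed.

Definition reduced u :=
  forall u', weyl_act A u' =1 weyl_act A u -> (size u <= size u')%N.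

Lemma reduced_wordP u : reduced_word A u <-> reduced u.
Proof.
split=> red_u u' eq_u'u; apply: red_u; first by move=> lam k; rewrite eq_u'u.
by move=> lam; apply: funext => k; rewrite eq_u'u.
Qed.

Lemma reduced_catr u v : reduced (u ++ v) -> reduced v.
Proof.
move=> red_uv v' eq_v'v; have := red_uv (u ++ v') (weyl_eq_catl u eq_v'v).
by rewrite !size_cat leq_add2l.
Qed.

Lemma reduced_catl u v : reduced (u ++ v) -> reduced u.
Proof.
move=> red_uv u' eq_u'u; have := red_uv (u' ++ v) (weyl_eq_catr v eq_u'u).
by rewrite !size_cat leq_add2r.
Qed.

Lemma reduced_rev u : reduced u -> reduced (rev u).
Proof.
move=> red_u u' eq_u'; rewrite size_rev -(size_rev u'); apply: red_u.
by have := weyl_eq_rev eq_u'; rewrite revK.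
Qed.

Lemma not_reduced_square u x v : ~ reduced (u ++ [:: x; x] ++ v).
Proof.
move=> red_uxxv; have := red_uxxv (u ++ v).
have eq_uv : weyl_act A (u ++ v) =1 weyl_act A (u ++ [:: x; x] ++ v).
  by move=> lam; rewrite !weyl_act_cat /= srefK.
by move/(_ eq_uv); rewrite !size_cat /=; lia.
Qed.

Definition delta (m : 'I_l) : 'I_l -> int := fun j => if j == m then 1 else 0.

Lemma sum_delta_mul m (f : 'I_l -> int) : \sum_j delta m j * f j = f m.
Proof.
rewrite (bigD1 m) //= /delta eqxx mul1r big1 ?addr0 // => j /negbTE ->.
by rewrite mul0r.
Qed.

(* [weyl_act A u] is linear; the determinant (-1)^(size u) of its matrix detects the
   parity of the length. *)
Definition weyl_mx u : 'M[int]_l := \matrix_(k, m) weyl_act A u (delta m) k.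

Lemma weyl_mx_cons j u : weyl_mx (j :: u) = weyl_mx [:: j] *m weyl_mx u.
Proof.
apply/matrixP => k m; rewrite !mxE /= /sref.
under eq_bigr => p _ do rewrite !mxE /= /sref mulrBl.
rewrite sumrB; congr (_ - _).
  by rewrite -(sum_delta_mul k); apply: eq_bigr => p _; rewrite /delta eq_sym.
rewrite (bigD1 j) //= /delta eqxx big1 ?addr0 => [|p]; first by rewrite mul1r mulrC.
by rewrite eq_sym => /negbTE ->; rewrite !mul0r.
Qed.

Lemma det_weyl_mx1 j : \det (weyl_mx [:: j]) = -1.
Proof.
rewrite (expand_det_row _ j) (bigD1 j) //= big1 ?addr0 => [|m ne_mj]; last first.
  by rewrite !mxE /= /sref /delta eq_sym (negbTE ne_mj) mul0r subr0 mul0r.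
rewrite /cofactor; have -> : row' j (col' j (weyl_mx [:: j])) = 1%:M.
  apply/matrixP => a b; rewrite !mxE /= /sref /delta (inj_eq (@lift_inj _ j)).
  by rewrite (negbTE (neq_lift j b)) mul0r subr0; case: (a == b).
by rewrite !mxE /= /sref /delta eqxx Aii det1 addnn -signr_odd odd_double; ring.
Qed.

Lemma det_weyl_mx u : \det (weyl_mx u) = (-1) ^+ size u.
Proof.
elim: u => [|j u IH].
  have -> : weyl_mx [::] = 1%:M.
    by apply/matrixP => k m; rewrite !mxE /= /delta; case: (k == m).
  by rewrite det1.
by rewrite weyl_mx_cons det_mulmx IH det_weyl_mx1 exprS.
Qed.

Lemma weyl_eq_odd_size u v :
  weyl_act A u =1 weyl_act A v -> odd (size u) = odd (size v).
Proof.
move=> eq_uv; have : weyl_mx u = weyl_mx v by apply/matrixP => k m; rewrite !mxE eq_uv.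
move/(congr1 determinant); rewrite !det_weyl_mx -signr_odd -[_ ^+ size v]signr_odd.
by case: (odd (size u)); case: (odd (size v)); rewrite ?expr0 ?expr1 // => /eqP.
Qed.

(* The parity argument rules out a word of the same length. *)
Lemma reduced_rcons_not_reduced v s : reduced v -> ~ reduced (rcons v s) ->
  exists2 v', weyl_act A v' =1 weyl_act A (rcons v s) & (size v').+1 = size v.
Proof.
move=> red_v not_red; have [v' eq_v' le_v'v] : exists2 v',
    weyl_act A v' =1 weyl_act A (rcons v s) & (size v' <= size v)%N.
  apply: contrapT => no_v'; apply: not_red => v' eq_v'.
  by rewrite size_rcons leqNgt; apply/negP => lt_v'; apply: no_v'; exists v'.
exists v' => //.
have le_vv' : (size v <= (size v').+1)%N.
  rewrite -(size_rcons v' s); apply: red_v => lam.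
  by rewrite -cats1 weyl_act_cat eq_v' -cats1 !weyl_act_cat /= srefK.
have odd_v' := weyl_eq_odd_size eq_v'; rewrite size_rcons /= in odd_v'.
have [eq_size|ne_size] := eqVneq (size v') (size v); last by lia.
by move: odd_v'; rewrite eq_size; case: (odd _).
Qed.

End WeylWords.

Section RootPositivity.
Variables (l : nat) (A : 'I_l -> 'I_l -> int) (d : 'I_l -> nat).
Hypothesis Aii : forall i, A i i = 2.
Hypothesis Aoff : forall i j, i != j -> A i j <= 0.
Hypothesis Azero : forall i j, (A i j == 0) = (A j i == 0).
Hypothesis d_gt0 : forall i, (0 < d i)%N.
Hypothesis dA_sym : forall i j, (d i)%:Z * A i j = (d j)%:Z * A j i.
Hypothesis dA_posdef : forall x : 'I_l -> rat, (exists i, x i != 0) ->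
  0 < \sum_i \sum_j x i * (d i)%:R * (A i j)%:~R * x j.
Implicit Types (u v w : seq 'I_l) (c : 'I_l -> int) (lam mu : 'I_l -> int).

(* [c] gives coordinates in the basis of simple roots; as alpha_m = sum_k a_km omega_k,
   [root_weight c] gives the coordinates of the same element in the basis of
   fundamental weights. *)
Definition root_weight c : 'I_l -> int := fun k => \sum_m A k m * c m.

Definition root_sref j c : 'I_l -> int :=
  fun k => c k - (if k == j then \sum_m A j m * c m else 0).

Definition root_act u c := foldr root_sref c u.

Lemma weyl_act_root_weight u c :
  weyl_act A u (root_weight c) = root_weight (root_act u c).
Proof.
elim: u => [|j u IH] //=; rewrite IH; apply: funext => k.
rewrite /sref /root_weight /root_sref.
under [in RHS]eq_bigr => m _ do rewrite mulrBr.
rewrite sumrB; congr (_ - _).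
rewrite [RHS](bigD1 j) //= eqxx [X in _ + X]big1 ?addr0 => [|m /negbTE ->].
  by rewrite mulrC.
by rewrite mulr0.
Qed.

Lemma root_weight_delta i : root_weight (delta i) = fun k => A k i.
Proof.
apply: funext => k; rewrite /root_weight -(sum_delta_mul i (A k)).
by apply: eq_bigr => m _; rewrite mulrC.
Qed.

Lemma root_act_cat u v c : root_act (u ++ v) c = root_act u (root_act v c).
Proof. exact: foldr_cat. Qed.

Lemma root_srefK j : involutive (root_sref j).
Proof.
move=> c; apply: funext => k; rewrite /root_sref.
have -> : \sum_m A j m * (c m - (if m == j then \sum_m0 A j m0 * c m0 else 0))
    = - \sum_m A j m * c m.
  under eq_bigr => m _ do rewrite mulrBr.
  rewrite sumrB [X in _ - X](bigD1 j) //= eqxx [X in _ - (_ + X)]big1 ?addr0 => [|m].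
    by rewrite Aii; ring.
  by move=> /negbTE ->; rewrite mulr0.
by case: (k == j); ring.
Qed.

Lemma root_act_revK u : cancel (root_act u) (root_act (rev u)).
Proof.
elim: u => [|j u IH] c //=.
by rewrite rev_cons -cats1 root_act_cat /= root_srefK IH.
Qed.

Lemma root_act_Krev u : cancel (root_act (rev u)) (root_act u).
Proof. by move=> c; rewrite -{1}(revK u) root_act_revK. Qed.

Lemma root_act_lin u (a b : int) c1 c2 :
  root_act u (fun k => a * c1 k + b * c2 k) =
  (fun k => a * root_act u c1 k + b * root_act u c2 k).
Proof.
elim: u => [|j u IH] //=; rewrite IH; apply: funext => k; rewrite /root_sref.
have -> : \sum_m A j m * (a * root_act u c1 m + b * root_act u c2 m)
    = a * \sum_m A j m * root_act u c1 m + b * \sum_m A j m * root_act u c2 m.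
  by rewrite !mulr_sumr -big_split /=; apply: eq_bigr => m _; ring.
by case: (k == j); ring.
Qed.

Lemma root_act0 u : root_act u (fun=> 0) = (fun=> 0).
Proof.
elim: u => //= j u ->; apply: funext => k.
by rewrite /root_sref big1 ?if_same ?subr0 // => m _; rewrite mulr0.
Qed.

Lemma dA_posdef_int (x : 'I_l -> int) : (exists i, x i != 0) ->
  0 < \sum_i \sum_j x i * (d i)%:Z * A i j * x j.
Proof.
move=> [i xi]; have := @dA_posdef (fun k => (x k)%:~R) (ex_intro _ i _).
rewrite intr_eq0 => /(_ xi); rewrite -(ltr0z rat) rmorph_sum /=.
congr (_ < _); apply: eq_bigr => a _; rewrite rmorph_sum; apply: eq_bigr => b _.
by rewrite !rmorphM.
Qed.

Lemma root_weight_inj c : (forall k, root_weight c k = 0) -> forall k, c k = 0.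
Proof.
move=> c0 k; apply: contrapT => /eqP ck; have := dA_posdef_int (ex_intro _ k ck).
rewrite big1 ?ltxx // => i _; under eq_bigr => j _ do rewrite -mulrA.
by rewrite -mulr_sumr; have := c0 i; rewrite /root_weight => ->; rewrite mulr0.
Qed.

Lemma root_act_weyl_eq u v :
  weyl_act A u =1 weyl_act A v -> forall c, root_act u c = root_act v c.
Proof.
move=> eq_uv c; apply: funext => k; apply/eqP; rewrite -subr_eq0; apply/eqP.
apply: (root_weight_inj (c := fun k => root_act u c k - root_act v c k)) => k'.
have := congr1 (fun f => f k') (eq_uv (root_weight c)).
rewrite /= !weyl_act_root_weight /root_weight => eq_k'.
by under eq_bigr => m _ do rewrite mulrBr; rewrite sumrB eq_k' subrr.
Qed.

(* The invariant form, normalised by (omega_k, alpha_m) = d_k [k = m]. *)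
Definition wpair mu c := \sum_k c k * (d k)%:Z * mu k.

Lemma wpair_sref j mu c : wpair (sref A j mu) (root_sref j c) = wpair mu c.
Proof.
rewrite /wpair /sref /root_sref; set S := \sum_m A j m * c m.
have dS : \sum_k c k * (d k)%:Z * A k j = (d j)%:Z * S.
  by rewrite /S mulr_sumr; apply: eq_bigr => k _; rewrite -mulrA dA_sym; ring.
have -> : \sum_k (c k - (if k == j then S else 0)) * (d k)%:Z * (mu k - mu j * A k j)
    = \sum_k c k * (d k)%:Z * mu k - mu j * \sum_k c k * (d k)%:Z * A k j
      - \sum_k (if k == j then S * (d k)%:Z * (mu k - mu j * A k j) else 0).
  by rewrite mulr_sumr -!sumrB; apply: eq_bigr => k _; case: (k == j); ring.
by rewrite -big_mkcond big_pred1_eq Aii dS; ring.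
Qed.

Lemma wpair_weyl_act u mu c : wpair (weyl_act A u mu) (root_act u c) = wpair mu c.
Proof. by elim: u => [|j u IH] //=; rewrite wpair_sref. Qed.

Lemma wpair_delta mu i : wpair mu (delta i) = (d i)%:Z * mu i.
Proof.
rewrite /wpair (bigD1 i) //= /delta eqxx big1 ?addr0 => [|k /negbTE ->]; first ring.
by rewrite !mul0r.
Qed.

Lemma sum_pair s t (f : 'I_l -> int) : s != t ->
  (forall i, i != s -> i != t -> f i = 0) -> \sum_i f i = f s + f t.
Proof.
move=> ne_st f0; rewrite (bigD1 s) //= (bigD1 t) 1?eq_sym //=.
by rewrite big1 ?addr0 // => i /andP [/f0].
Qed.

(* Evaluate the form at x = -a_st alpha_s + 2 alpha_t: it equals 2 d_t (4 - a_st a_ts). *)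
Lemma cartan_product_lt4 s t : s != t -> A s t * A t s < 4.
Proof.
move=> ne_st; have ne_ts : (t == s) = false by rewrite eq_sym (negbTE ne_st).
pose x k : int := if k == s then - A s t else if k == t then 2 else 0.
have x0 i : i != s -> i != t -> x i = 0 by rewrite /x => /negbTE -> /negbTE ->.
have xt : x t != 0 by rewrite /x ne_ts eqxx.
have := dA_posdef_int (ex_intro _ t xt).
rewrite (sum_pair ne_st) => [|i ns nt]; last first.
  by apply: big1 => j _; rewrite x0 // !mul0r.
rewrite !(sum_pair ne_st) => [|j ns nt|j ns nt]; rewrite ?(x0 j) ?mulr0 //.
rewrite /x eqxx ne_ts eqxx !Aii.
have := d_gt0 t; rewrite -ltz_nat; nia.
Qed.

Lemma cartan_rank2_pairs s t : s != t ->
  (A s t, A t s) \in [:: (0, 0); (-1, -1); (-1, -2); (-2, -1); (-1, -3); (-3, -1)].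
Proof.
move=> ne_st; have := cartan_product_lt4 ne_st; have := Azero s t.
have := Aoff ne_st; have := Aoff (_ : t != s); rewrite eq_sym => /(_ ne_st).
rewrite !inE !xpair_eqE; move: (A s t) (A t s) => a b le_b le_a eq0 lt4.
have [a0|a0] := eqVneq a 0; first by move: eq0; rewrite a0 eqxx => /esym/eqP ->.
have b0 : b != 0 by rewrite -eq0.
have : -3 <= a by nia.
have : -3 <= b by nia.
lia.
Qed.

Fixpoint alt_bits L : seq bool :=
  if L is L'.+1 then ~~ odd L' :: alt_bits L' else [::].

Definition letter (s t : 'I_l) (b : bool) := if b then s else t.

(* The alternating word of length [L] in [s] and [t] that ends with [s]. *)
Definition alt_word s t L := map (letter s t) (alt_bits L).

Lemma size_alt_word s t L : size (alt_word s t L) = L.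
Proof. by rewrite size_map; elim: L => //= L ->. Qed.

Lemma letter_negb s t : letter s t \o negb =1 letter t s.
Proof. by case. Qed.

Lemma alt_word_swap s t L :
  alt_word t s L = map (letter s t) (map negb (alt_bits L)).
Proof. by rewrite -map_comp (eq_map (letter_negb s t)). Qed.

Lemma alt_word_rcons s t L : alt_word s t L.+1 = rcons (alt_word t s L) s.
Proof.
rewrite /alt_word; have -> : alt_bits L.+1 = rcons (map negb (alt_bits L)) true.
  by elim: L => [|L IH] //; rewrite -[alt_bits L.+2]/(~~ odd L.+1 :: alt_bits L.+1) [in LHS]IH.
by rewrite map_rcons -alt_word_swap.
Qed.

Lemma alt_bits_cat k L : exists p, alt_bits (k + L) = p ++ alt_bits L.
Proof.
elim: k => [|k [p IH]]; first by exists [::].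
by exists (~~ odd (k + L) :: p); rewrite addSn /= IH.
Qed.

Definition rank2_weight_step (a b : int) (bit : bool) (f : int * int * int * int) :=
  let: (f1, f2, g1, g2) := f in
  if bit then (1 - f1 - a * g1, - f2 - a * g2, g1, g2)
  else (f1, f2, - b * f1 - g1, 1 - b * f2 - g2).

Definition rank2_weight_coefs a b bs := foldr (rank2_weight_step a b) (0, 0, 0, 0) bs.

Lemma weyl_act_rank2 s t bs lam k : weyl_act A (map (letter s t) bs) lam k =
  let: (f1, f2, g1, g2) := rank2_weight_coefs (A s t) (A t s) bs in
  lam k - A k s * (f1 * lam s + f2 * lam t) - A k t * (g1 * lam s + g2 * lam t).
Proof.
elim: bs k => [|b bs IH] k /=; first by ring.
rewrite /sref; case: b; rewrite /letter /= !IH;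
by case: (rank2_weight_coefs _ _ bs) => [[[f1 f2] g1] g2] /=; rewrite !Aii; ring.
Qed.

Lemma weyl_eq_rank2 s t bs bs' :
  rank2_weight_coefs (A s t) (A t s) bs = rank2_weight_coefs (A s t) (A t s) bs' ->
  weyl_act A (map (letter s t) bs) =1 weyl_act A (map (letter s t) bs').
Proof. by move=> eq_coefs lam; apply: funext => k; rewrite !weyl_act_rank2 eq_coefs. Qed.

Definition rank2_root_step (a b : int) (bit : bool) (pq : int * int) :=
  let: (p, q) := pq in if bit then (- p - a * q, q) else (p, - q - b * p).

Definition rank2_root_coefs a b bs := foldr (rank2_root_step a b) (1, 0) bs.

Lemma root_act_rank2 s t bs : s != t ->
  root_act (map (letter s t) bs) (delta s) =
  let: (p, q) := rank2_root_coefs (A s t) (A t s) bs in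
  fun k => p * delta s k + q * delta t k.
Proof.
move=> ne_st; have ne_ts : (t == s) = false by rewrite eq_sym (negbTE ne_st).
elim: bs => [|b bs IH] /=.
  by apply: funext => k; rewrite /delta; case: (k == s); case: (k == t); ring.
rewrite IH; case: (rank2_root_coefs _ _ bs) => p q /=.
have sum_pq j : \sum_m A j m * (p * delta s m + q * delta t m) = A j s * p + A j t * q.
  rewrite (sum_pair ne_st) => [|m /negbTE ms /negbTE mt]; last first.
    by rewrite /delta ms mt; ring.
  by rewrite /delta !eqxx ne_ts (negbTE ne_st); ring.
apply: funext => k; rewrite /root_sref /letter; case: b => /=; rewrite sum_pq !Aii /delta;
by case: (k == s); case: (k == t); ring.
Qed.

(* [m] is the order of s_s s_t: the first conjunct is the braid relation, the second
   says that the alternating words of length < m ending with t send alpha_s to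
   nonnegative combinations of alpha_s and alpha_t. *)
Definition dihedral_certificate (a b : int) (m : nat) :=
  (rank2_weight_coefs a b (alt_bits m) ==
   rank2_weight_coefs a b (map negb (alt_bits m))) &&
  all (fun L => let: (p, q) := rank2_root_coefs a b (map negb (alt_bits L)) in
                (0 <= p) && (0 <= q)) (iota 0 m).

Lemma dihedral_certificate_exists s t : s != t ->
  exists2 m, (0 < m)%N & dihedral_certificate (A s t) (A t s) m.
Proof.
move/cartan_rank2_pairs; rewrite !inE !xpair_eqE.
case/orP=> [|/orP[|/orP[|/orP[|/orP[]]]]] /andP [/eqP -> /eqP ->].
- by exists 2%N; vm_compute.
- by exists 3%N; vm_compute.
- by exists 4%N; vm_compute.
- by exists 4%N; vm_compute.
- by exists 6%N; vm_compute.
- by exists 6%N; vm_compute.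
Qed.

Lemma reduced_alt_word s t x : s != t -> all (fun y => (y == s) || (y == t)) x ->
  reduced A x -> last s x = s -> x = alt_word s t (size x).
Proof.
move=> ne_st; elim: x => [|a x IH] //= /andP [a_st x_st] red_ax last_x.
case: x IH x_st red_ax last_x => [|b x] IH x_st red_ax last_x /=.
  by move: last_x => /= ->.
have alt_bx := IH x_st (reduced_catr (u := [:: a]) red_ax) last_x.
rewrite {}alt_bx /= in red_ax *.
rewrite -[alt_word s t _.+2]/(letter s t (~~ odd (size x).+1) :: alt_word s t (size x).+1).
have ne_a : a != letter s t (~~ odd (size x)).
  by apply: contraPneq red_ax => ->; exact: (not_reduced_square Aii (u := [::])).
congr (_ :: _); move: ne_a; rewrite /letter /=.
by case: (odd _); case/orP: a_st => /eqP ->; rewrite ?eqxx.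
Qed.

Lemma not_reduced_alt_word_long s t m : dihedral_certificate (A s t) (A t s) m ->
  (0 < m)%N -> ~ reduced A (alt_word s t m.+1).
Proof.
case: m => // m /andP [/eqP braid _] _ red_alt.
set c := letter s t (odd m).
have alt_m2 : alt_word s t m.+2 = c :: alt_word s t m.+1 by rewrite /alt_word /= negbK.
have alt_neg : map (letter s t) (map negb (alt_bits m.+1)) = c :: alt_word t s m.
  by rewrite /= negbK alt_word_swap.
have : weyl_act A (alt_word t s m) =1 weyl_act A (alt_word s t m.+2).
  move=> lam; rewrite alt_m2 -cat1s weyl_act_cat (weyl_eq_rank2 braid) alt_neg.
  by rewrite /= srefK.
by move/red_alt; rewrite !size_alt_word; lia.
Qed.
Lemma reduced_alt_word_size s t m L : dihedral_certificate (A s t) (A t s) m ->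
  (0 < m)%N -> reduced A (alt_word s t L) -> (L <= m)%N.
Proof.
move=> cert m_gt0 red_L; rewrite leqNgt; apply/negP => lt_mL.
have [p alt_L] := alt_bits_cat (L - m.+1) m.+1; rewrite subnK // in alt_L.
apply: (not_reduced_alt_word_long cert m_gt0).
by apply: (reduced_catr (u := map (letter s t) p)); rewrite -map_cat -alt_L.
Qed.

Lemma rank2_root_ge0 s t u : s != t -> all (fun y => (y == s) || (y == t)) u ->
  reduced A (rcons u s) -> exists p q,
  [/\ 0 <= p, 0 <= q & root_act u (delta s) = fun k => p * delta s k + q * delta t k].
Proof.
move=> ne_st u_st red_us.
have [m m_gt0 cert] := dihedral_certificate_exists ne_st.
have us_st : all (fun y => (y == s) || (y == t)) (rcons u s).
  by rewrite all_rcons eqxx u_st.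
have := reduced_alt_word ne_st us_st red_us (last_rcons _ _ _).
rewrite size_rcons alt_word_rcons => /rcons_inj [alt_u].
have le_um : ((size u).+1 <= m)%N.
  by apply: (reduced_alt_word_size cert m_gt0); rewrite alt_word_rcons -alt_u.
move: cert => /andP [_ /allP /(_ (size u))]; rewrite mem_iota add0n => /(_ le_um).
rewrite [X in root_act X]alt_u alt_word_swap root_act_rank2 //.
by case: (rank2_root_coefs _ _ _) => p q /andP [p_ge0 q_ge0]; exists p, q.
Qed.

(* Split off a longest right factor [u] in the letters [s] and [t]; the minimality of
   the left factor [v] makes [v s] and [v t] reduced. *)
Lemma reduced_parabolic_split w s t : s != t -> reduced A (rcons w t) ->
  exists v u, [/\ all (fun y => (y == s) || (y == t)) u,
    weyl_act A (v ++ u) =1 weyl_act A (rcons w t),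
    (size v + size u = (size w).+1)%N, (size v <= size w)%N &
    forall x, (x == s) || (x == t) -> reduced A (rcons v x)].
Proof.
move=> ne_st red_wt.
pose split_at v u := [/\ all (fun y => (y == s) || (y == t)) u,
  weyl_act A (v ++ u) =1 weyl_act A (rcons w t) & (size v + size u = (size w).+1)%N].
have split_w : split_at w [:: t] by split; rewrite /= ?eqxx ?orbT ?cats1 ?addn1.
have ex_split : exists k, `[< exists v u, split_at v u /\ size v = k >].
  by exists (size w); apply/asboolP; exists w, [:: t].
case: (ex_minnP ex_split) => _ /asboolP [v [u [[u_st eq_vu size_vu] <-]]] min_v.
have le_vw : (size v <= size w)%N by apply: min_v; apply/asboolP; exists w, [:: t].
exists v, u; split => // x x_st.
have red_v : reduced A v.
  move=> v' eq_v'; have : weyl_act A (v' ++ u) =1 weyl_act A (rcons w t).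
    by move=> lam; rewrite -eq_vu !weyl_act_cat eq_v'.
  by move/red_wt; rewrite size_cat size_rcons -size_vu leq_add2r.
apply: contrapT => not_red.
have [v' eq_v' size_v'] := reduced_rcons_not_reduced Aii red_v not_red.
suff : (size v <= size v')%N by rewrite -size_v' ltnn.
apply: min_v; apply/asboolP; exists v', (x :: u); split=> //; split.
- by rewrite /= x_st.
- move=> lam; rewrite -eq_vu weyl_act_cat /= eq_v' -cats1 !weyl_act_cat /=.
  by rewrite srefK.
- by rewrite /= addnS -addSn size_v'.
Qed.

(* Induction on the length of [w]: write [w = v u] as
   above with [t] the last letter of [w]; the rank 2 case gives
   [u alpha_s = p alpha_s + q alpha_t] with [p, q >= 0]. *)
Lemma reduced_rcons_root_ge0 w s : reduced A (rcons w s) ->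
  forall k, 0 <= root_act w (delta s) k.
Proof.
have [N] := ubnP (size w); elim: N => // N IH in w s *.
case/lastP: w => [|w t] size_w red_wts; first by move=> k; rewrite /= /delta; case: ifP.
have ne_st : s != t.
  apply: contraPneq red_wts => ->.
  by rewrite -!cats1 -catA -[[:: t] ++ [:: t]]cats0; apply: not_reduced_square.
have red_wt : reduced A (rcons w t) by apply: (reduced_catl (v := [:: s])); rewrite cats1.
have [v [u [u_st eq_vu size_vu le_vw red_vx]]] := reduced_parabolic_split ne_st red_wt.
have red_us : reduced A (rcons u s).
  move=> u' eq_u'; have : weyl_act A (v ++ u') =1 weyl_act A (rcons (rcons w t) s).
    move=> lam; rewrite weyl_act_cat eq_u' -[rcons (rcons w t) s]cats1 weyl_act_cat.
    by rewrite -eq_vu -cats1 -!weyl_act_cat catA.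
  by move/red_wts; rewrite size_cat !size_rcons -size_vu -addnS leq_add2l.
have [p [q [p_ge0 q_ge0 root_us]]] := rank2_root_ge0 ne_st u_st red_us.
have root_v_ge0 x : (x == s) || (x == t) -> forall k, 0 <= root_act v (delta x) k.
  by move=> x_st; apply: IH (red_vx x x_st); rewrite size_rcons in size_w; lia.
move=> k; rewrite -(root_act_weyl_eq eq_vu) root_act_cat root_us root_act_lin.
by rewrite addr_ge0 // mulr_ge0 // root_v_ge0 // eqxx ?orbT.
Qed.

Lemma reduced_cons_root_ge0 i t : reduced A (i :: t) ->
  forall k, 0 <= root_act (rev t) (delta i) k.
Proof.
by move=> red_it; apply: reduced_rcons_root_ge0; rewrite -rev_cons; apply: reduced_rev.
Qed.

Lemma root_act_delta_neq0 u i : exists k, root_act u (delta i) k != 0.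
Proof.
apply: contrapT => all0.
have root0 : root_act u (delta i) = fun=> 0.
  by apply: funext => k; apply: contrapT => nz; apply: all0; exists k; apply/eqP.
have := root_act_revK u (delta i); rewrite root0 root_act0 => /(congr1 (fun c => c i)).
by rewrite /delta eqxx.
Qed.

(* (t lam, alpha_i) = (lam, t^-1 alpha_i), and t^-1 alpha_i is a positive root. *)
Lemma weyl_act_dominant_ge0 i t lam : reduced A (i :: t) ->
  (forall k, 0 <= lam k) -> 0 <= weyl_act A t lam i.
Proof.
move=> red_it lam_ge0.
have : 0 <= wpair lam (root_act (rev t) (delta i)).
  by apply: sumr_ge0 => k _; rewrite !mulr_ge0 ?reduced_cons_root_ge0.
by rewrite -(wpair_weyl_act t) root_act_Krev wpair_delta pmulr_rge0 ?ltz_nat.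
Qed.

End RootPositivity.

Lemma mulmx_exprS (R : pzRingType) m p (X : 'M[R]_m) (u : 'M[R]_(m, p)) j :
  X ^+ j.+1 *m u = X *m (X ^+ j *m u).
Proof. by rewrite exprS -mulmxE mulmxA. Qed.

Lemma mulmx_exprSr (R : pzRingType) m p (X : 'M[R]_m) (u : 'M[R]_(m, p)) j :
  X ^+ j.+1 *m u = X ^+ j *m (X *m u).
Proof. by rewrite exprSr -mulmxE mulmxA. Qed.

Lemma iter_mulmxE (R : pzRingType) m p (X : 'M[R]_m) (u : 'M[R]_(m, p)) K :
  iter K (mulmx X) u = X ^+ K *m u.
Proof. by elim: K => [|K IH] /=; rewrite ?mul1mx // IH mulmx_exprS. Qed.

Section SL2Strings.
Variables (F : numFieldType) (n : nat) (e f H : 'M[F]_n) (c : F).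
Hypothesis ef_comm : e *m f = f *m e + H.
Hypothesis He_comm : H *m e = e *m H + (2 * c) *: e.
Hypothesis Hf_comm : H *m f = f *m H - (2 * c) *: f.
Hypothesis c_neq0 : c != 0.
Implicit Type u : 'cV[F]_n.

Lemma sl2_H_fpow m u j : H *m u = (c * m) *: u ->
  H *m (f ^+ j *m u) = (c * (m - 2 * j%:R)) *: (f ^+ j *m u).
Proof.
move=> Hu; elim: j => [|j IH]; first by rewrite mul1mx mulr0 subr0.
rewrite mulmx_exprS (mulmxA H) Hf_comm mulmxBl -mulmxA IH -scalemxAr -scalemxAl -scalerBl.
by congr (_ *: _); rewrite !mulrSr; ring.
Qed.

Lemma sl2_e_fpow m u j : H *m u = (c * m) *: u ->
  e *m (f ^+ j.+1 *m u) =
  f ^+ j.+1 *m (e *m u) + (j.+1%:R * c * (m - j%:R)) *: (f ^+ j *m u).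
Proof.
move=> Hu; elim: j => [|j IH].
  by rewrite expr1 expr0 mul1mx mulmxA ef_comm mulmxDl -mulmxA Hu mul1r subr0.
rewrite mulmx_exprS (mulmxA e) ef_comm mulmxDl -mulmxA IH mulmxDr -scalemxAr.
rewrite (sl2_H_fpow j.+1 Hu) -!mulmx_exprS -addrA; congr (_ + _).
by rewrite -scalerDl; congr (_ *: _); rewrite !mulrSr; ring.
Qed.

(* By induction on K: e u, of weight m + 2, vanishes; then the coefficient
   (j + 1) c (m - j) in [sl2_e_fpow] lets f^(j+1) u = 0 descend to f^j u = 0. *)
Lemma sl2_string_eq0 K m u : H *m u = (c * m%:R) *: u ->
  e ^+ K *m u = 0 -> f ^+ m *m u = 0 -> u = 0.
Proof.
elim: K m u => [|K IH] m u Hu eKu fmu; first by rewrite -eKu mul1mx.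
have He_u : H *m (e *m u) = (c * (m.+2)%:R) *: (e *m u).
  rewrite mulmxA He_comm mulmxDl -mulmxA Hu -scalemxAr -scalemxAl -scalerDl.
  by congr (_ *: _); rewrite !mulrSr; ring.
have eu0 : e *m u = 0.
  apply: (IH m.+2) => //; first by rewrite -mulmx_exprSr.
  have := sl2_e_fpow m Hu; rewrite mulmx_exprS fmu mulmx0 subrr mulr0 scale0r addr0.
  by move=> fe0; rewrite mulmx_exprS -fe0 !mulmx0.
suff fj0 j : (j <= m)%N -> f ^+ j *m u = 0 -> u = 0 by apply: fj0 m (leqnn m) fmu.
elim: j => [|j IHj] le_jm fju; first by rewrite -fju mul1mx.
apply: IHj (ltnW le_jm) _; have := sl2_e_fpow j Hu.
rewrite fju eu0 !mulmx0 add0r => /esym/eqP; rewrite scaler_eq0 => /orP [|/eqP //].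
rewrite -natrB ?(ltnW le_jm) // !mulf_eq0 pnatr_eq0 (negbTE c_neq0) /=.
by rewrite pnatr_eq0 subn_eq0 leqNgt le_jm.
Qed.

Lemma sl2_raise_lower m u : e *m u = 0 -> H *m u = (c * m%:R) *: u ->
  exists2 a, a != 0 & e ^+ m *m (f ^+ m *m u) = a *: u.
Proof.
move=> eu0 Hu; pose a j := \prod_(k < j) (k.+1%:R * c * (m%:R - k%:R)).
have raise_lower j : e ^+ j *m (f ^+ j *m u) = a j *: u.
  elim: j => [|j IH]; first by rewrite /a big_ord0 scale1r !mul1mx.
  rewrite (mulmx_exprSr e) (sl2_e_fpow j Hu) eu0 mulmx0 add0r -scalemxAr IH.
  by rewrite scalerA /a big_ord_recr /= mulrC.
exists (a m) => //; apply/prodf_neq0 => k _; rewrite !mulf_neq0 ?pnatr_eq0 //.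
by rewrite -natrB ?pnatr_eq0 ?subn_eq0 -?ltnNge // ltnW.
Qed.

End SL2Strings.

Section YangianModule.
Variables (F : numFieldType) (l n : nat) (A : 'I_l -> 'I_l -> int) (d : 'I_l -> nat).
Variables (xp xm h : 'I_l -> nat -> 'M[F]_n).
Hypothesis Aii : forall i, A i i = 2.
Hypothesis d_gt0 : forall i, (0 < d i)%N.
Hypothesis yangian : yangian_rep A d xp xm h.
Local Notation cV := 'cV[F]_n.
Implicit Types (u v : cV) (mu nu : 'I_l -> int).

Lemma h_comm i j r s : h i r *m h j s = h j s *m h i r.
Proof.
case: yangian => [[hh _] _ _ _ _]; apply/eqP; rewrite -subr_eq0; apply/eqP.
exact: hh.
Qed.

Lemma h0_xp i j s : h i 0 *m xp j s = xp j s *m h i 0 + da F A d i j *: xp j s.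
Proof.
case: yangian => [[_ hx] _ _ _ _]; have [<- _] := hx i j s.
by rewrite /comm addrC subrK.
Qed.

Lemma h0_xm i j s : h i 0 *m xm j s = xm j s *m h i 0 - da F A d i j *: xm j s.
Proof.
case: yangian => [[_ hx] _ _ _ _]; have [_ <-] := hx i j s.
by rewrite /comm addrC subrK.
Qed.

Lemma xp_xm i j r s :
  xp i r *m xm j s = xm j s *m xp i r + (if i == j then h i (r + s)%N else 0).
Proof. by case: yangian => [_ xx _ _ _]; rewrite -xx /comm addrC subrK. Qed.

Lemma hS_xm i j r s : h i r.+1 *m xm j s =
  xm j s *m h i r.+1 + (h i r *m xm j s.+1 - xm j s.+1 *m h i r)
  - (da F A d i j / 2) *: (h i r *m xm j s + xm j s *m h i r).
Proof.
case: yangian => [_ _ hx _ _]; have [_] := hx i j r s; rewrite /comm /acomm => eq_h.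
by rewrite -eq_h addrACA subrr addr0 addrC subrK.
Qed.

Lemma da_diag i : da F A d i i = 2 * (d i)%:R.
Proof. by rewrite /da Aii rmorphM /= mulrC. Qed.

Definition has_weight mu u := forall i, h i 0 *m u = ((d i)%:Z * mu i)%:~R *: u.

Lemma has_weightD mu u v : has_weight mu u -> has_weight mu v -> has_weight mu (u + v).
Proof. by move=> hu hv i; rewrite mulmxDr hu hv scalerDr. Qed.

Lemma has_weightZ mu a u : has_weight mu u -> has_weight mu (a *: u).
Proof. by move=> hu i; rewrite -scalemxAr hu !scalerA mulrC. Qed.

Lemma has_weightB mu u v : has_weight mu u -> has_weight mu v -> has_weight mu (u - v).
Proof. by move=> hu hv; rewrite -scaleN1r; apply/has_weightD/has_weightZ. Qed.

Lemma has_weight_ext mu nu u : mu =1 nu -> has_weight mu u -> has_weight nu u.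
Proof. by move=> eq_mu hu i; rewrite -eq_mu. Qed.

Lemma has_weight_h mu u j r : has_weight mu u -> has_weight mu (h j r *m u).
Proof. by move=> hu i; rewrite mulmxA h_comm -mulmxA hu -scalemxAr. Qed.

Lemma has_weight_xp mu u j s :
  has_weight mu u -> has_weight (fun k => mu k + A k j) (xp j s *m u).
Proof.
move=> hu i; rewrite mulmxA h0_xp mulmxDl -mulmxA hu -scalemxAl -scalemxAr.
by rewrite -scalerDl /da -rmorphD /=; congr (_%:~R *: _); ring.
Qed.

Lemma has_weight_xm mu u j s :
  has_weight mu u -> has_weight (fun k => mu k - A k j) (xm j s *m u).
Proof.
move=> hu i; rewrite mulmxA h0_xm mulmxBl -mulmxA hu -scalemxAl -scalemxAr.
by rewrite -scalerBl /da -rmorphB /=; congr (_%:~R *: _); ring.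
Qed.

Lemma has_weight_pow X beta :
  (forall mu u, has_weight mu u -> has_weight (fun k => mu k + beta k) (X *m u)) ->
  forall mu u m, has_weight mu u ->
  has_weight (fun k => mu k + m%:Z * beta k) (X ^+ m *m u).
Proof.
move=> hX mu u; elim=> [|m IH] hu.
  by rewrite mul1mx; apply: has_weight_ext hu => k; rewrite mul0r addr0.
rewrite mulmx_exprS; apply: has_weight_ext (hX _ _ (IH hu)) => k.
by rewrite -addn1 PoszD; ring.
Qed.

Lemma has_weight_xp_pow mu u j s m : has_weight mu u ->
  has_weight (fun k => mu k + m%:Z * A k j) (xp j s ^+ m *m u).
Proof. exact: has_weight_pow (fun mu u => @has_weight_xp mu u j s) mu u m. Qed.

Lemma has_weight_xm_pow mu u j s m : has_weight mu u ->
  has_weight (fun k => mu k - m%:Z * A k j) (xm j s ^+ m *m u).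
Proof.
move/(has_weight_pow (fun mu u => @has_weight_xm mu u j s) m).
by apply: has_weight_ext => k; rewrite mulrN.
Qed.

Lemma h0_weight mu u i : has_weight mu u -> h i 0 *m u = ((d i)%:R * (mu i)%:~R) *: u.
Proof. by move=> hu; rewrite hu rmorphM. Qed.

Lemma xp_xm_diag i : xp i 0 *m xm i 0 = xm i 0 *m xp i 0 + h i 0.
Proof. by rewrite xp_xm eqxx. Qed.

Lemma h0_xp_diag i : h i 0 *m xp i 0 = xp i 0 *m h i 0 + (2 * (d i)%:R) *: xp i 0.
Proof. by rewrite h0_xp da_diag. Qed.

Lemma h0_xm_diag i : h i 0 *m xm i 0 = xm i 0 *m h i 0 - (2 * (d i)%:R) *: xm i 0.
Proof. by rewrite h0_xm da_diag. Qed.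

Lemma d_neq0 i : (d i)%:R != 0 :> F.
Proof. by rewrite pnatr_eq0 -lt0n d_gt0. Qed.

Inductive lower_span v : cV -> Prop :=
  | lower_span0 : lower_span v 0
  | lower_spanD u1 u2 : lower_span v u1 -> lower_span v u2 -> lower_span v (u1 + u2)
  | lower_spanZ a u : lower_span v u -> lower_span v (a *: u)
  | lower_span_self : lower_span v v
  | lower_span_xm j s u : lower_span v u -> lower_span v (xm j s *m u).

Lemma lower_spanB v u1 u2 : lower_span v u1 -> lower_span v u2 -> lower_span v (u1 - u2).
Proof. by move=> span1 span2; rewrite -scaleN1r; apply/lower_spanD/lower_spanZ. Qed.

(* For the step r -> r + 1, [hS_xm] trades h_{i,r+1} x^-_{j,s} for h_{i,r} x^-_{j,s+1}. *)
Lemma lower_span_h v : (forall i r, exists c, h i r *m v = c *: v) ->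
  forall u, lower_span v u -> forall i r, lower_span v (h i r *m u).
Proof.
move=> hv u; elim=> {u} [i r|u1 u2 _ IH1 _ IH2 i r|a u _ IH i r|i r|j s u span_u IH i r].
- by rewrite mulmx0; apply: lower_span0.
- by rewrite mulmxDr; apply: lower_spanD.
- by rewrite -scalemxAr; apply: lower_spanZ.
- by have [c ->] := hv i r; apply/lower_spanZ/lower_span_self.
elim: r s => [|r IHr] s.
  rewrite mulmxA h0_xm mulmxBl -mulmxA -scalemxAl.
  by apply: lower_spanB; [apply: lower_span_xm; apply: IH | apply/lower_spanZ/lower_span_xm].
rewrite mulmxA hS_xm !mulmxBl !mulmxDl -!scalemxAl !mulmxDl -!mulmxA mulNmx -mulmxA.
apply: lower_spanB.
  apply: lower_spanD; first by apply: lower_span_xm; apply: IH.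
  by apply: lower_spanD => //; rewrite -scaleN1r; apply/lower_spanZ/lower_span_xm; apply: IH.
by apply/lower_spanZ/lower_spanD => //; apply: lower_span_xm; apply: IH.
Qed.

Lemma lower_span_xp v : (forall i r, exists c, h i r *m v = c *: v) ->
  (forall i r, xp i r *m v = 0) ->
  forall u, lower_span v u -> forall i r, lower_span v (xp i r *m u).
Proof.
move=> hv xpv u; elim=> {u} [i r|u1 u2 _ IH1 _ IH2 i r|a u _ IH i r|i r|j s u span_u IH i r].
- by rewrite mulmx0; apply: lower_span0.
- by rewrite mulmxDr; apply: lower_spanD.
- by rewrite -scalemxAr; apply: lower_spanZ.
- by rewrite xpv; apply: lower_span0.
rewrite mulmxA xp_xm mulmxDl -mulmxA; apply: lower_spanD; first exact: lower_span_xm.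
by case: (i == j); [apply: lower_span_h | rewrite mul0mx; apply: lower_span0].
Qed.

Lemma lower_span_full v : irreducible_rep xp xm h -> v != 0 ->
  (forall i r, exists c, h i r *m v = c *: v) ->
  (forall i r, xp i r *m v = 0) -> forall u, lower_span v u.
Proof.
move=> [_ irr] v_neq0 hv xpv.
have : is_submodule xp xm h (lower_span v).
  split; [exact: lower_span0 | exact: lower_spanD | exact: lower_spanZ |].
  by move=> i r u span_u; split; [exact: lower_span_xp | exact: lower_span_xm |
    exact: lower_span_h].
by case/irr => [/(_ v (lower_span_self v)) v0|//]; rewrite v0 eqxx in v_neq0.
Qed.

(* Apply h_{i,0} - d_i mu_i, which kills the first summand, and induct on the number of
   summands. *)
Lemma weight_vec_sum_eq0 nu u ps : has_weight nu u ->
  List.Forall (fun p : ('I_l -> int) * cV =>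
                 has_weight p.1 p.2 /\ exists i, p.1 i != nu i) ps ->
  u = \sum_(p <- ps) p.2 -> u = 0.
Proof.
have [N] := ubnP (size ps); elim: N => // N IH in u ps *.
case: ps => [|[mu w] ps] /= size_ps hu; first by rewrite big_nil.
case/List.Forall_cons_iff => -[/= hw [i ne_i]] ps_other eq_u.
pose T (z : cV) := h i 0 *m z - ((d i)%:Z * mu i)%:~R *: z.
have Tu : T u = (((d i)%:Z * nu i)%:~R - ((d i)%:Z * mu i)%:~R) *: u.
  by rewrite /T hu scalerBl.
suff /eqP : T u = 0.
  rewrite Tu scaler_eq0 -rmorphB -mulrBr /= intr_eq0 mulf_eq0 subr_eq0.
  rewrite [nu i == _]eq_sym (negbTE ne_i) orbF eqz_nat.
  by rewrite (negbTE (lt0n_neq0 (d_gt0 i))) => /eqP.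
apply: (IH (T u) [seq (q.1, T q.2) | q <- ps]); rewrite ?size_map //.
- by rewrite Tu; apply: has_weightZ.
- apply/List.Forall_map; apply: List.Forall_impl ps_other => q [hq ne_q]; split => //.
  by apply: has_weightB; [apply: has_weight_h | apply: has_weightZ].
rewrite big_map eq_u big_cons /T mulmxDr scalerDr mulmx_sumr scaler_sumr sumrB opprD.
by rewrite addrACA hw subrr add0r.
Qed.

Lemma sum_weight_vecs_eq0 N (wt : 'I_N -> 'I_l -> int) (us : 'I_N -> cV) :
  (forall k, has_weight (wt k) (us k)) ->
  (forall k k', k != k' -> exists i, wt k i != wt k' i) ->
  \sum_k us k = 0 -> forall k, us k = 0.
Proof.
move=> hus wt_ne sum0 k0; apply: (weight_vec_sum_eq0 (hus k0)
  (ps := [seq (wt k, - us k) | k <- index_enum 'I_N & k != k0])).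
- apply/List.Forall_map; elim: (index_enum 'I_N) => [|k ks IH] /=.
    exact: List.Forall_nil.
  case: ifP => // ne_k; apply: List.Forall_cons => //; split; last exact: wt_ne.
  by rewrite -scaleN1r; apply: has_weightZ.
- rewrite big_map big_filter sumrN; apply/eqP; rewrite -addr_eq0.
  by move: sum0; rewrite (bigD1 k0) //= => ->.
Qed.

Lemma cV_dependent (vs : 'I_n.+1 -> cV) :
  exists2 a : 'I_n.+1 -> F, (exists k, a k != 0) & \sum_k a k *: vs k = 0.
Proof.
pose M : 'M[F]_(n.+1, n) := \matrix_(k, j) vs k j 0.
have ker_neq0 : kermx M != 0.
  apply/negP => /eqP ker0; have := mxrank_ker M; rewrite ker0 mxrank0.
  by have := rank_leq_col M; lia.
have [k0 [j0 nz]] : exists k0 j0, kermx M k0 j0 != 0.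
  apply: contrapT => ker0; move/negP: ker_neq0; apply; apply/eqP/matrixP => a b.
  by rewrite [RHS]mxE; apply: contrapT => nz; apply: ker0; exists a, b; apply/eqP.
exists (fun k => kermx M k0 k); first by exists j0.
apply/matrixP => a b; rewrite ord1 summxE [RHS]mxE.
have := congr1 (fun X : 'M[F]_(n.+1, n) => X k0 a) (mulmx_ker M); rewrite /= !mxE.
by move=> ker_a; rewrite -[RHS]ker_a; apply: eq_bigr => k _; rewrite /M !mxE.
Qed.

(* Some vector X^k u, k <= n, is zero: these n + 1 vectors are linearly dependent and
   have pairwise distinct weights. *)
Lemma weight_raising_nilpotent X beta : (exists i, beta i != 0) ->
  (forall mu u, has_weight mu u -> has_weight (fun k => mu k + beta k) (X *m u)) ->
  forall mu u, has_weight mu u -> exists K, X ^+ K *m u = 0.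
Proof.
move=> [i0 nz_beta] hX mu u hu; have [a [k0 nz_a] dep] := cV_dependent (fun k => X ^+ k *m u).
exists k0; suff /eqP : a k0 *: (X ^+ k0 *m u) = 0.
  by rewrite scaler_eq0 (negbTE nz_a) => /eqP.
apply: (sum_weight_vecs_eq0 (wt := fun k i => mu i + (val k)%:Z * beta i) _ _ dep k0).
  by move=> k; apply/has_weightZ/has_weight_pow.
move=> k k' ne_k; exists i0; apply: contra ne_k; rewrite (inj_eq (addrI _)).
by rewrite -subr_eq0 -mulrBl mulf_eq0 (negbTE nz_beta) orbF subr_eq0 eqz_nat.
Qed.

(* [sl2_string_eq0] for the triple (x^+_{i,0}, x^-_{i,0}, h_{i,0}), where h_{i,0} acts
   by d_i mu_i; the needed power of x^+_{i,0} exists by finite dimensionality. *)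
Lemma weight_vec_eq0_of_xm i mu u m : has_weight mu u -> mu i = m%:Z ->
  xm i 0 ^+ m *m u = 0 -> u = 0.
Proof.
move=> hu mu_i xm_u.
have [K xp_u] : exists K, xp i 0 ^+ K *m u = 0.
  apply: (weight_raising_nilpotent (beta := fun k => A k i) _ _ hu).
    by exists i; rewrite Aii.
  by move=> ? ?; apply: has_weight_xp.
apply: (sl2_string_eq0 (xp_xm_diag i) (h0_xp_diag i) (h0_xm_diag i) (d_neq0 i) _ xp_u xm_u).
by rewrite (h0_weight i hu) mu_i.
Qed.

Lemma weight_vec_eq0_of_xp i mu u m : has_weight mu u -> mu i = - m%:Z ->
  xp i 0 ^+ m *m u = 0 -> u = 0.
Proof.
move=> hu mu_i xp_u.
have [K xm_u] : exists K, xm i 0 ^+ K *m u = 0.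
  apply: (weight_raising_nilpotent (beta := fun k => - A k i) _ _ hu).
    by exists i; rewrite Aii.
  by move=> ? ?; apply: has_weight_xm.
have ef : xm i 0 *m xp i 0 = xp i 0 *m xm i 0 + - h i 0 by rewrite xp_xm_diag addrK.
have He : - h i 0 *m xm i 0 = xm i 0 *m - h i 0 + (2 * (d i)%:R) *: xm i 0.
  by rewrite mulNmx mulmxN h0_xm_diag opprB addrC.
have Hf : - h i 0 *m xp i 0 = xp i 0 *m - h i 0 - (2 * (d i)%:R) *: xp i 0.
  by rewrite mulNmx mulmxN h0_xp_diag opprD.
apply: (sl2_string_eq0 ef He Hf (d_neq0 i) _ xm_u xp_u).
by rewrite mulNmx (h0_weight i hu) mu_i -scaleNr rmorphN mulrN opprK.
Qed.

Lemma sref_weight_vec i mu u : has_weight mu u -> u != 0 ->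
  exists2 u', has_weight (sref A i mu) u' & u' != 0.
Proof.
move=> hu u_neq0; case mu_i : (mu i) => [m|m].
  exists (xm i 0 ^+ m *m u).
    by apply: has_weight_ext (has_weight_xm_pow i 0 m hu) => k; rewrite /sref mu_i.
  by apply: contra u_neq0 => /eqP xm_u; rewrite (weight_vec_eq0_of_xm hu mu_i xm_u).
exists (xp i 0 ^+ m.+1 *m u).
  by apply: has_weight_ext (has_weight_xp_pow i 0 m.+1 hu) => k;
    rewrite /sref mu_i NegzE; ring.
apply: contra u_neq0 => /eqP xp_u.
by rewrite (weight_vec_eq0_of_xp hu _ xp_u) // mu_i NegzE.
Qed.

Lemma weyl_act_weight_vec t mu u : has_weight mu u -> u != 0 ->
  exists2 u', has_weight (weyl_act A t mu) u' & u' != 0.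
Proof.
elim: t => [|j t IH] hu u_neq0; first by exists u.
by have [u' hu' u'_neq0] := IH hu u_neq0; apply: sref_weight_vec.
Qed.

Section TopWeight.
Hypothesis dA_posdef : forall x : 'I_l -> rat, (exists i, x i != 0) ->
  0 < \sum_i \sum_j x i * (d i)%:R * (A i j)%:~R * x j.
Variables (lam : 'I_l -> int) (v : cV).
Hypothesis v_weight : has_weight lam v.
Hypothesis v_spans : forall u, lower_span v u.

Definition lowered_weight (ns : 'I_l -> nat) : 'I_l -> int :=
  fun k => lam k - root_weight A (fun m => (ns m)%:Z) k.

Definition bump (ns : 'I_l -> nat) j : 'I_l -> nat := fun m => (ns m + (m == j))%N.

Lemma lowered_weight0 : lowered_weight (fun=> 0%N) =1 lam.
Proof.
by move=> k; rewrite /lowered_weight /root_weight big1 ?subr0 // => m _; rewrite mulr0.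
Qed.

Lemma has_weight_lowered_xm ns u j s : has_weight (lowered_weight ns) u ->
  has_weight (lowered_weight (bump ns j)) (xm j s *m u).
Proof.
move/(has_weight_xm j s); apply: has_weight_ext => k.
rewrite /lowered_weight /root_weight /bump (bigD1 j) //= [in RHS](bigD1 j) //= eqxx.
under [in RHS]eq_bigr => m ne_mj do rewrite (negbTE ne_mj) addn0.
by rewrite addn1 -addn1 PoszD; ring.
Qed.

Definition strictly_lowered (p : ('I_l -> nat) * cV) :=
  (exists k, p.1 k != 0%N) /\ has_weight (lowered_weight p.1) p.2.

Lemma lower_span_decomp u : lower_span v u ->
  exists c ps, u = c *: v + \sum_(p <- ps) p.2 /\ List.Forall strictly_lowered ps.
Proof.
elim=> {u} [|u1 u2 _ [c1 [ps1 [-> low1]]] _ [c2 [ps2 [-> low2]]]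
  |a u _ [c [ps [-> low]]]| |j s u _ [c [ps [-> low]]]].
- by exists 0, [::]; rewrite big_nil scale0r addr0.
- exists (c1 + c2), (ps1 ++ ps2); split; last exact/List.Forall_app.
  by rewrite big_cat scalerDl addrACA.
- exists (a * c), [seq (p.1, a *: p.2) | p <- ps].
  rewrite big_map scalerDr scalerA scaler_sumr; split => //.
  apply/List.Forall_map; apply: List.Forall_impl low => p [nz hp].
  by split; last exact: has_weightZ.
- by exists 1, [::]; rewrite big_nil scale1r addr0.
have bump_nz ns : exists k, bump ns j k != 0%N by exists j; rewrite /bump eqxx addn1.
exists 0, ((bump (fun=> 0%N) j, c *: (xm j s *m v))
           :: [seq (bump p.1 j, xm j s *m p.2) | p <- ps]).
rewrite big_cons big_map scale0r add0r mulmxDr -scalemxAr mulmx_sumr; split => //.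
apply: List.Forall_cons.
  split; first exact: bump_nz.
  apply/has_weightZ/has_weight_lowered_xm.
  by apply: has_weight_ext v_weight => k; rewrite lowered_weight0.
apply/List.Forall_map; apply: List.Forall_impl low => p [_ hp].
by split; [exact: bump_nz | exact: has_weight_lowered_xm].
Qed.

Lemma weight_vec_lowered nu u : has_weight nu u -> u != 0 ->
  exists ns, nu =1 lowered_weight ns.
Proof.
move=> hu u_neq0; apply: contrapT => not_lowered.
have other ns : exists i, lowered_weight ns i != nu i.
  apply: contrapT => same; apply: not_lowered; exists ns => i.
  by apply: contrapT => /eqP ne; apply: same; exists i; rewrite eq_sym.
have [c [ps [eq_u low]]] := lower_span_decomp (v_spans u).
move/eqP: u_neq0; apply; apply: (weight_vec_sum_eq0 hu
  (ps := (lowered_weight (fun=> 0%N), c *: v)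
         :: [seq (lowered_weight p.1, p.2) | p <- ps])); last first.
  by rewrite big_cons big_map.
apply: List.Forall_cons.
  split; last exact: other.
  by apply/has_weightZ/(has_weight_ext _ v_weight) => k /=; rewrite lowered_weight0.
by apply/List.Forall_map; apply: List.Forall_impl low => p [_ hp]; split; last exact: other.
Qed.

Lemma lowered_weight_top ns : lowered_weight ns =1 lam -> forall k, ns k = 0%N.
Proof.
move=> eq_lam k; apply/eqP; rewrite -eqz_nat; apply/eqP; move: k.
apply: (root_weight_inj dA_posdef) => k.
move: (eq_lam k); rewrite /lowered_weight => /eqP.
by rewrite subr_eq addrC -subr_eq subrr => /eqP.
Qed.

Lemma top_weight_space u : has_weight lam u -> exists c, u = c *: v.
Proof.
move=> hu; have [c [ps [eq_u low]]] := lower_span_decomp (v_spans u).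
exists c; apply/eqP; rewrite -subr_eq0; apply/eqP.
apply: (weight_vec_sum_eq0 (nu := lam) (ps := [seq (lowered_weight p.1, p.2) | p <- ps])).
- by apply: has_weightB => //; apply: has_weightZ.
- apply/List.Forall_map; apply: List.Forall_impl low => p [[k nz_k] hp]; split => //.
  apply: contrapT => same; move: nz_k; rewrite (lowered_weight_top _ k) // => i.
  by apply: contrapT => /eqP ne; apply: same; exists i.
- by rewrite eq_u addrC addKr big_map.
Qed.

Lemma weight_above_top_eq0 c u : (forall k, 0 <= c k) ->
  has_weight (fun k => lam k + root_weight A c k) u -> u != 0 -> forall k, c k = 0.
Proof.
move=> c_ge0 hu u_neq0; have [ns eq_ns] := weight_vec_lowered hu u_neq0.
have sum0 : forall k, c k + (ns k)%:Z = 0.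
  apply: (root_weight_inj dA_posdef) => k.
  move: (eq_ns k); rewrite /lowered_weight /root_weight => /addrI eq_k.
  by under eq_bigr do rewrite mulrDr; rewrite big_split /= eq_k addNr.
by move=> k; have := sum0 k; have := c_ge0 k; lia.
Qed.

End TopWeight.

End YangianModule.

Section LoweredVectors.
Variables (F : numFieldType) (l n : nat) (A : 'I_l -> 'I_l -> int) (d : 'I_l -> nat).
Variables (xp xm h : 'I_l -> nat -> 'M[F]_n) (lam : 'I_l -> int) (vplus : 'cV[F]_n).
Hypothesis Aii : forall i, A i i = 2.
Hypothesis Aoff : forall i j, i != j -> A i j <= 0.
Hypothesis Azero : forall i j, (A i j == 0) = (A j i == 0).
Hypothesis d_gt0 : forall i, (0 < d i)%N.
Hypothesis dA_sym : forall i j, (d i)%:Z * A i j = (d j)%:Z * A j i.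
Hypothesis dA_posdef : forall x : 'I_l -> rat, (exists i, x i != 0) ->
  0 < \sum_i \sum_j x i * (d i)%:R * (A i j)%:~R * x j.
Hypothesis yangian : yangian_rep A d xp xm h.
Hypothesis irreducible : irreducible_rep xp xm h.
Hypothesis lam_ge0 : forall k, 0 <= lam k.
Hypothesis vplus_neq0 : vplus != 0.
Hypothesis vplus_xp : forall i r, xp i r *m vplus = 0.
Hypothesis vplus_h : forall i r, exists c, h i r *m vplus = c *: vplus.
Hypothesis vplus_weight : has_weight d h lam vplus.

Local Notation lv := (lowered_vec A (fun k => xm k 0%N) lam vplus).

Let vplus_spans := lower_span_full yangian irreducible vplus_neq0 vplus_h vplus_xp.

Lemma lowered_vec_cons k t : lv (k :: t) = xm k 0 ^+ `|weyl_act A t lam k| *m lv t.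
Proof. exact: iter_mulmxE. Qed.

Lemma lowered_exponent_ge0 i t : reduced A (i :: t) -> 0 <= weyl_act A t lam i.
Proof. by move=> red_it; apply: weyl_act_dominant_ge0. Qed.

Lemma lowered_vec_weight t : reduced A t -> has_weight d h (weyl_act A t lam) (lv t).
Proof.
elim: t => [|k t IH] red_kt //; have red_t := reduced_catr (u := [:: k]) red_kt.
rewrite lowered_vec_cons; apply: has_weight_ext (has_weight_xm_pow yangian k 0 _ (IH red_t)).
by move=> j; rewrite /= /sref gez0_abs ?lowered_exponent_ge0.
Qed.

(* Otherwise [t^-1] would carry its weight [t lam + alpha_i] to the weight
   [lam + t^-1 alpha_i], which lies strictly above [lam]. *)
Lemma xp_lowered_vec i t r : reduced A (i :: t) -> xp i r *m lv t = 0.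
Proof.
move=> red_it; apply: contrapT => /eqP xp_neq0.
have red_t := reduced_catr (u := [:: i]) red_it.
have wt_xp := has_weight_xp yangian i r (lowered_vec_weight red_t).
have [u wt_u u_neq0] := weyl_act_weight_vec Aii d_gt0 yangian (rev t) wt_xp xp_neq0.
have [k /eqP] := root_act_delta_neq0 Aii (rev t) i; apply.
apply: (weight_above_top_eq0 d_gt0 yangian dA_posdef vplus_weight vplus_spans _ _ u_neq0).
  by move=> j; apply: reduced_cons_root_ge0.
apply: has_weight_ext wt_u => j.
by rewrite weyl_actD weyl_act_revK // -root_weight_delta weyl_act_root_weight.
Qed.

(* By induction on [t]: [x^+_{k,0}^m] maps the weight space of [s_k mu] injectively
   into that of [mu], which is spanned by [lv t], and [x^+^m x^-^m] is a nonzero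
   scalar on [lv t]. *)
Lemma lowered_vec_weight_space t u : reduced A t ->
  has_weight d h (weyl_act A t lam) u -> exists c, u = c *: lv t.
Proof.
elim: t u => [|k t IH] u red_kt hu.
  exact: (top_weight_space d_gt0 yangian dA_posdef vplus_weight vplus_spans).
have red_t := reduced_catr (u := [:: k]) red_kt.
set mu := weyl_act A t lam in hu *; set m := `|mu k|%N.
have mu_k : mu k = m%:Z by rewrite gez0_abs ?lowered_exponent_ge0.
have [c1 eq_c1] : exists c1, xp k 0 ^+ m *m u = c1 *: lv t.
  apply: IH red_t _; apply: has_weight_ext (has_weight_xp_pow yangian k 0 m hu) => j.
  by rewrite /= /sref -/mu mu_k; ring.
have [a a_neq0 raise] : exists2 a, a != 0 &
    xp k 0 ^+ m *m (xm k 0 ^+ m *m lv t) = a *: lv t.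
  apply: (sl2_raise_lower (xp_xm_diag yangian k) (h0_xm_diag Aii yangian k)
    (d_neq0 F d_gt0 k)); first exact: xp_lowered_vec.
  by rewrite (h0_weight k (lowered_vec_weight red_t)) -/mu mu_k.
exists (c1 / a); apply/eqP; rewrite -subr_eq0; apply/eqP.
apply: (weight_vec_eq0_of_xp Aii d_gt0 yangian (i := k) (mu := sref A k mu) (m := m)).
- apply: has_weightB => //; apply: has_weightZ; rewrite lowered_vec_cons -/mu -/m.
  apply: has_weight_ext (has_weight_xm_pow yangian k 0 m (lowered_vec_weight red_t)).
  by move=> j; rewrite /sref mu_k.
- by rewrite /sref mu_k Aii; ring.
- by rewrite mulmxBr -scalemxAr lowered_vec_cons -/mu -/m raise eq_c1 scalerA divfK // subrr.
Qed.

Lemma lowered_vec_highest_weight i t : reduced A (i :: t) ->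
  0 <= weyl_act A t lam i /\ hw_for_Yi xp h i (lv t).
Proof.
move=> red_it; have red_t := reduced_catr (u := [:: i]) red_it.
split; first exact: lowered_exponent_ge0.
split=> r; first exact: xp_lowered_vec.
exact: (lowered_vec_weight_space red_t (has_weight_h yangian i r (lowered_vec_weight red_t))).
Qed.

End LoweredVectors.

Theorem mainTheorem3 (R : realType) (l : nat) (A : 'I_l -> 'I_l -> int)
    (d : 'I_l -> nat) (n : nat) (xp xm h : 'I_l -> nat -> 'M[R[i]]_n)
    (pi : 'I_l -> {poly R[i]}) (vplus : 'cV[R[i]]_n) (w : seq 'I_l) :
  simple_cartan_data A d ->
  yangian_rep A d xp xm h ->
  irreducible_rep xp xm h ->
  (forall k, pi k \is monic) ->
  drinfeld_hw_vector d xp h pi vplus ->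
  reduced_word A w ->
  let lam_pi : 'I_l -> int := fun k => ((size (pi k)).-1)%:Z in
  forall (w1 w2 : seq 'I_l) (rj : 'I_l), w = w1 ++ rj :: w2 ->
    0 <= weyl_act A w2 lam_pi rj /\
    hw_for_Yi xp h rj (lowered_vec A (fun k => xm k 0%N) lam_pi vplus w2).
Proof.
move=> cartan yangian irreducible monic_pi hw red_w lam_pi w1 w2 rj eq_w.
case: cartan => _ [Aii Aoff Azero] _ [d_gt0 _ dA_sym] dA_posdef.
case: hw => vplus_neq0 vplus_xp [phi phi_h].
have lam_ge0 k : 0 <= lam_pi k by [].
have vplus_h i r : exists c, h i r *m vplus = c *: vplus.
  by exists (phi i r); case: (phi_h i).
have vplus_weight : has_weight d h lam_pi vplus.
  move=> i; have [ratio ->] := phi_h i.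
  by rewrite (laurent_ratio_shift_head (monic_pi i) ratio) rmorphM.
have red_rjw2 : reduced A (rj :: w2).
  by move/reduced_wordP: red_w; rewrite eq_w; apply: reduced_catr.
exact: (lowered_vec_highest_weight Aii Aoff Azero d_gt0 dA_sym dA_posdef yangian
  irreducible lam_ge0 vplus_neq0 vplus_xp vplus_h vplus_weight red_rjw2).
Qed.
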